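(* Let $G$ be a group and $\rho,\phi,\psi\in H^1(G;\mathbb{F}_2)$. Let $K=\mathrm{Ker}(\rho)$ and $L=K\cap\mathrm{Ker}(\phi)$. Then: (2) the canonical projections induce isomorphisms $H^1(G/X^2(K);\mathbb{F}_2)\cong H^1(G/X^2(L);\mathbb{F}_2)\cong H^1(G/X^4(G);\mathbb{F}_2)\cong H^1(G;\mathbb{F}_2)$; (3) $\rho\phi=0$ in $H^2(G;\mathbb{F}_2)$ if and only if $\rho\phi=0$ in $H^2(G/X^2(K);\mathbb{F}_2)$; (4) $\phi^2=\rho\phi+\rho\psi$ in $H^2(G;\mathbb{F}_2)$ if and only if $\phi^2=\rho\phi+\rho\psi$ in $H^2(G/X^2(L);\mathbb{F}_2)$.
   Context: For a group $H$, $X^n(H)=\langle h^n\mid h\in H\rangle$ is the subgroup generated by all $n$-th powers. In (3) and (4), classes in $H^1$ of the quotient groups are identified with classes in $H^1(G;\mathbb{F}_2)$ via the isomorphisms of (2). Products are cup products. *)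

From HB Require Import structures.
From mathcomp Require Import all_boot all_order all_algebra.
From mathcomp Require Import monoid.
Set Implicit Arguments. Unset Strict Implicit. Unset Printing Implicit Defensive.
Import GRing.Theory.

Local Open Scope ring_scope.

(* A class in H^1(G;F_2) = Hom(G, F_2) (trivial coefficients, so 1-coboundaries
   vanish and H^1 is the group of homomorphisms). *)
Definition hom1 (G : groupType) (f : G -> 'F_2) : Prop :=
  forall x y : G, f (x * y)%g = f x + f y.

Inductive gen_subgroup (G : groupType) (S : G -> Prop) : G -> Prop :=
  | gen_in x : S x -> gen_subgroup S x
  | gen_one : gen_subgroup S 1%g
  | gen_mul x y : gen_subgroup S x -> gen_subgroup S y -> gen_subgroup S (x * y)%g
  | gen_inv x : gen_subgroup S x -> gen_subgroup S (x^-1)%g.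

Definition Xpow (G : groupType) (n : nat) (H : G -> Prop) : G -> Prop :=
  gen_subgroup (fun x => exists2 h, H h & x = (h ^+ n)%g).

(* p : G -> Q is (a model of) the canonical projection G -> G/N:
   a surjective group homomorphism with kernel exactly N. *)
Definition quotient_map (G Q : groupType) (p : G -> Q) (N : G -> Prop) : Prop :=
  [/\ forall x y : G, p (x * y)%g = (p x * p y)%g,
      forall q : Q, exists g : G, p g = q
    & forall g : G, p g = 1%g <-> N g].

Definition inflation1_bij (G Q : groupType) (p : G -> Q) : Prop :=
  (forall f : G -> 'F_2, hom1 f -> exists2 a : Q -> 'F_2, hom1 a & forall g, a (p g) = f g)
  /\ (forall a b : Q -> 'F_2, hom1 a -> hom1 b ->
        (forall g, a (p g) = b (p g)) -> a = b).

Definition cochain2 (G : groupType) := G -> G -> 'F_2.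

Definition coboundary2 (G : groupType) (f : cochain2 G) : Prop :=
  exists c : G -> 'F_2, forall g h : G, f g h = c h - c (g * h)%g + c g.

Definition cohomologous2 (G : groupType) (f1 f2 : cochain2 G) : Prop :=
  coboundary2 (fun g h => f1 g h - f2 g h).

Definition cup11 (G : groupType) (a b : G -> 'F_2) : cochain2 G :=
  fun g h => a g * b h.

Definition add2 (G : groupType) (f1 f2 : cochain2 G) : cochain2 G :=
  fun g h => f1 g h + f2 g h.

(* Every F_2-valued character kills squares, hence X^2(K), X^2(L) and X^4(G),
   which gives (2). For (3) and (4), the cochain F representing the relation
   vanishes whenever its first argument lies in the subgroup H (= K resp. L),
   and whenever its second argument lies in X^2(H). If F = dc, the first
   property makes c additive on H, so c kills X^2(H); the second property then
   makes c constant on cosets of X^2(H), so c descends to G/X^2(H). *)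
From HB Require Import structures.
From mathcomp Require Import all_boot all_order all_algebra.
From mathcomp Require Import monoid.
From Stdlib Require Import IndefiniteDescription FunctionalExtensionality.
Import GRing.Theory.
Set Implicit Arguments. Unset Strict Implicit. Unset Printing Implicit Defensive.

Local Open Scope ring_scope.

Lemma pchar_F2 : (2 \in [pchar 'F_2])%N.
Proof. exact: pchar_Fp. Qed.

Lemma F2_sub_add_eq0 (a b d : 'F_2) : (a - b + d == 0) = (b == a + d).
Proof. by rewrite addrAC addr_eq0 !(oppr_pchar2 pchar_F2) eq_sym. Qed.

Definition subgroup_pred (G : groupType) (H : G -> Prop) : Prop :=
  [/\ H 1%g, forall x y, H x -> H y -> H (x * y)%g & forall x, H x -> H x^-1%g].

Definition additive_on (G : groupType) (H : G -> Prop) (c : G -> 'F_2) : Prop :=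
  forall x y, H x -> H y -> c (x * y)%g = c x + c y.

Section Subgroups.

Variable G : groupType.

Lemma subgroupT : subgroup_pred (fun _ : G => True).
Proof. by []. Qed.

Lemma subgroupI (H1 H2 : G -> Prop) :
  subgroup_pred H1 -> subgroup_pred H2 -> subgroup_pred (fun g => H1 g /\ H2 g).
Proof.
case=> H1_1 H1M H1V [H2_1 H2M H2V]; split=> [//|x y [? ?] [? ?]|x [? ?]].
- by split; [exact: H1M | exact: H2M].
- by split; [exact: H1V | exact: H2V].
Qed.

Lemma gen_subgroup_min (S H : G -> Prop) :
  subgroup_pred H -> (forall x, S x -> H x) -> forall x, gen_subgroup S x -> H x.
Proof. by case=> H1 HM HV SH x; elim=> [y /SH|//|y z _ + _|y _]; auto. Qed.

End Subgroups.

Section AdditiveOn.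

Variables (G : groupType) (H : G -> Prop) (c : G -> 'F_2).
Hypotheses (sgH : subgroup_pred H) (addc : additive_on H c).

Lemma additive_on1 : c 1%g = 0.
Proof.
have [H1 _ _] := sgH.
by apply: (@addrI _ (c 1%g)); rewrite -addc // mulg1 addr0.
Qed.

Lemma additive_onV x : H x -> c x^-1%g = c x.
Proof.
move=> Hx; have [_ _ /(_ x Hx) Hx'] := sgH.
apply: (@addrI _ (c x)).
by rewrite -addc // mulgV additive_on1 (addrr_pchar2 pchar_F2).
Qed.

Lemma additive_on_sqr x : H x -> c (x ^+ 2)%g = 0.
Proof. by move=> Hx; rewrite expg2 addc // (addrr_pchar2 pchar_F2). Qed.

Lemma subgroup_ker_on : subgroup_pred (fun g => H g /\ c g = 0).
Proof.
have [H1 HM HV] := sgH.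
split=> [|x y [Hx cx] [Hy cy]|x [Hx cx]]; first by split; last exact: additive_on1.
- by split; [exact: HM | rewrite addc // cx cy addr0].
- by split; [exact: HV | rewrite additive_onV].
Qed.

Lemma additive_on_Xpow2 x : Xpow 2 H x -> c x = 0.
Proof.
move=> /(gen_subgroup_min subgroup_ker_on) -[] // y [h Hh ->].
by split; [case: sgH => _ HM _; rewrite expg2; exact: HM | exact: additive_on_sqr].
Qed.

End AdditiveOn.

Section Characters.

Variables (G : groupType) (f : G -> 'F_2).
Hypothesis hf : hom1 f.

Lemma hom1_additive_on (H : G -> Prop) : additive_on H f.
Proof. by move=> x y _ _; exact: hf. Qed.

Lemma subgroup_ker : subgroup_pred (fun g => f g = 0).
Proof.
have addf := hom1_additive_on (H := fun _ : G => True).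
split=> [|x y fx fy|x fx]; first exact: (additive_on1 (subgroupT G) addf).
- by rewrite hf fx fy addr0.
- by rewrite (additive_onV (subgroupT G) addf).
Qed.

Lemma hom1_Xpow_even (m : nat) (H : G -> Prop) x : Xpow (m * 2) H x -> f x = 0.
Proof.
apply: (gen_subgroup_min subgroup_ker) => _ [h _ ->].
by rewrite expgnA (additive_on_sqr (hom1_additive_on (H := fun _ : G => True))).
Qed.

End Characters.

Section QuotientMap.

Variables (G Q : groupType) (p : G -> Q) (N : G -> Prop).
Hypothesis pN : quotient_map p N.

Lemma quotient_map1 : p 1%g = 1%g.
Proof.
have [pM _ _] := pN.
by apply: (@mulgI _ (p 1%g)); rewrite -pM !mulg1.
Qed.

Lemma quotient_mapV x : p x^-1%g = (p x)^-1%g.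
Proof.
have [pM _ _] := pN.
by apply/esym/mulg1_eq; rewrite -pM mulgV quotient_map1.
Qed.

Lemma quotient_map_section : exists s : Q -> G, forall q, p (s q) = q.
Proof.
have [_ p_onto _] := pN.
exists (fun q => proj1_sig (constructive_indefinite_description _ (p_onto q))).
by move=> q; case: (constructive_indefinite_description _ (p_onto q)).
Qed.

Lemma quotient_map_constant (T : Type) (c : G -> T) :
  (forall g n, N n -> c (g * n)%g = c g) -> forall g g', p g = p g' -> c g = c g'.
Proof.
have [pM _ kerp] := pN => cN g g' pgg'.
rewrite -(mulVKg g g') cN //; apply/kerp.
by rewrite pM quotient_mapV pgg' mulVg.
Qed.

Lemma inflation1_bij_of_ker :
  (forall f : G -> 'F_2, hom1 f -> forall n, N n -> f n = 0) -> inflation1_bij p.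
Proof.
move=> fN; have [pM _ _] := pN; have [s ps] := quotient_map_section.
split=> [f hf | a b _ _ ab]; last first.
  by apply: functional_extensionality => q; rewrite -(ps q) ab.
have f_const g g' : p g = p g' -> f g = f g'.
  by apply: quotient_map_constant => h n Nn; rewrite hf (fN f hf n Nn) addr0.
exists (f \o s) => [q1 q2 | g] /=; last by apply: f_const; rewrite ps.
by rewrite -hf; apply: f_const; rewrite pM !ps.
Qed.

End QuotientMap.

Section CoboundaryInflation.

Variables (G Q : groupType) (p : G -> Q) (H : G -> Prop).
Hypotheses (sgH : subgroup_pred H) (pH : quotient_map p (Xpow 2 H)).

Lemma coboundary2_additive_on (F : cochain2 G) (c : G -> 'F_2) :
  (forall x y, H x -> F x y = 0) ->
  (forall g h, F g h = c h - c (g * h)%g + c g) -> additive_on H c.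
Proof.
move=> FH dc x y Hx _.
by apply/eqP; rewrite addrC -F2_sub_add_eq0 -dc FH.
Qed.

Lemma coboundary2_inflation (F : cochain2 G) (FQ : cochain2 Q) :
  (forall x y, H x -> F x y = 0) -> (forall g n, Xpow 2 H n -> F g n = 0) ->
  (forall g h, FQ (p g) (p h) = F g h) -> coboundary2 F <-> coboundary2 FQ.
Proof.
move=> FH FX2 FQp; have [pM _ _] := pH.
split=> [[c dc] | [c dc]]; last by exists (c \o p) => g h /=; rewrite -FQp dc pM.
have cX2 := additive_on_Xpow2 sgH (coboundary2_additive_on FH dc).
have c_const g g' : p g = p g' -> c g = c g'.
  apply: (quotient_map_constant pH) => h n X2n.
  by apply/eqP; rewrite -[c h]add0r -(cX2 n X2n) -F2_sub_add_eq0 -dc FX2.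
have [s ps] := quotient_map_section pH.
exists (c \o s) => q1 q2 /=.
rewrite -{1}(ps q1) -{1}(ps q2) FQp dc.
by rewrite (c_const (s q1 * s q2)%g (s (q1 * q2)%g)) // pM !ps.
Qed.

End CoboundaryInflation.

Theorem lemma4 (G : groupType) (rho phi psi : G -> 'F_2)
  (hrho : hom1 rho) (hphi : hom1 phi) (hpsi : hom1 psi) :
  let K := fun g : G => rho g = 0 in
  let L := fun g : G => K g /\ phi g = 0 in
  (* (2) *)
  [/\ (forall (Q : groupType) (p : G -> Q),
         quotient_map p (Xpow 2 K) -> inflation1_bij p),
      (forall (Q : groupType) (p : G -> Q),
         quotient_map p (Xpow 2 L) -> inflation1_bij p)
    & (forall (Q : groupType) (p : G -> Q),
         quotient_map p (Xpow 4 (fun _ : G => True)) -> inflation1_bij p)]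
  (* (3) *)
  /\ (forall (Q : groupType) (p : G -> Q), quotient_map p (Xpow 2 K) ->
        forall rb pb : Q -> 'F_2, hom1 rb -> hom1 pb ->
        (forall g, rb (p g) = rho g) -> (forall g, pb (p g) = phi g) ->
        (coboundary2 (cup11 rho phi) <-> coboundary2 (cup11 rb pb)))
  (* (4) *)
  /\ (forall (Q : groupType) (p : G -> Q), quotient_map p (Xpow 2 L) ->
        forall rb pb sb : Q -> 'F_2, hom1 rb -> hom1 pb -> hom1 sb ->
        (forall g, rb (p g) = rho g) -> (forall g, pb (p g) = phi g) ->
        (forall g, sb (p g) = psi g) ->
        (cohomologous2 (cup11 phi phi) (add2 (cup11 rho phi) (cup11 rho psi))
         <-> cohomologous2 (cup11 pb pb) (add2 (cup11 rb pb) (cup11 rb sb)))).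
Proof.
move=> K L.
have sgK : subgroup_pred K := subgroup_ker hrho.
have sgL : subgroup_pred L := subgroupI sgK (subgroup_ker hphi).
have X2_ker (f : G -> 'F_2) (H : G -> Prop) n : hom1 f -> Xpow 2 H n -> f n = 0.
  by move=> hf; exact: (hom1_Xpow_even hf (m := 1)).
split; [split|split].
- by move=> Q p pK; apply: (inflation1_bij_of_ker pK) => f hf n; exact: X2_ker.
- by move=> Q p pL; apply: (inflation1_bij_of_ker pL) => f hf n; exact: X2_ker.
- move=> Q p pX4; apply: (inflation1_bij_of_ker pX4) => f hf n.
  exact: (hom1_Xpow_even hf (m := 2)).
- move=> Q p pK rb pb _ _ rb_p pb_p; apply: (coboundary2_inflation sgK pK).
  + by move=> x y Kx; rewrite /cup11 Kx mul0r.
  + by move=> g n X2n; rewrite /cup11 (X2_ker _ _ _ hphi X2n) mulr0.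
  + by move=> g h; rewrite /cup11 rb_p pb_p.
- move=> Q p pL rb pb sb _ _ _ rb_p pb_p sb_p.
  apply: (coboundary2_inflation sgL pL).
  + by move=> x y [Kx phix]; rewrite /= /cup11 /add2 Kx phix !mul0r addr0 subrr.
  + move=> g n X2n; rewrite /= /cup11 /add2.
    by rewrite (X2_ker _ _ _ hphi X2n) (X2_ker _ _ _ hpsi X2n) !mulr0 addr0 subrr.
  + by move=> g h; rewrite /= /cup11 /add2 !rb_p !pb_p !sb_p.
Qed.
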